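(* Let $\mu$ be a distribution over $\{0,1\}^V$ and $\theta\in(0,1)$. For every vertex $i\in V$ and every distribution $\nu$ on $\Omega(\pi)$ such that the function $\sigma\mapsto\nu(\sigma)/\pi(\sigma)$ is increasing on $\Omega(\pi)$, we have $\nu P^i_{\pi\text{-GD}}\preceq_{\mathrm{sd}}\nu P^i_{\mathrm{s\text{-}GD}}$; that is, $P^i_{\pi\text{-GD}}\preceq_{\mathrm{mc}}P^i_{\mathrm{s\text{-}GD}}$.
   Context: Tilted $(\theta*\mu)(\sigma)\propto\mu(\sigma)\theta^{\|\sigma\|_1}$. $\mathsf{lift}:\{0,1\}^V\to\{0,1,\star\}^V$ random: independently per coordinate $0\mapsto0$, $1\mapsto\star$ w.p. $1-\theta$, $1\mapsto1$ w.p. $\theta$; $\mathsf{contr}$: $0\mapsto0$, $1,\star\mapsto1$. $\pi$: law of $\mathsf{lift}(X)$, $X\sim\mu$, support $\Omega(\pi)$. $P^i_{\pi\text{-GD}}$: resample $X_i$ from $\pi$ conditioned on $X_{V\setminus\{i\}}$. $P^i_{\mathrm{s\text{-}GD}}$: if $X_i=\star$ keep it; otherwise resample $X_i\in\{0,1\}$ from $(\theta*\mu)_i^{\sigma_{V\setminus\{i\}}}$ with $\sigma=\mathsf{contr}(X)$. Order $0<1<\star$, coordinatewise partial order on $\{0,1,\star\}^V$; $f$ increasing means $X\preceq Y\Rightarrow f(X)\le f(Y)$; $\nu\preceq_{\mathrm{sd}}\nu'$ iff $\mathbb E_\nu f\le\mathbb E_{\nu'}f$ for every increasing $f\ge0$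 (equivalently, a monotone coupling exists). $P\preceq_{\mathrm{mc}}Q$ means $\nu P\preceq_{\mathrm{sd}}\nu Q$ for all $\nu$ with $\nu/\pi$ increasing. *)

From HB Require Import structures.
From mathcomp Require Import all_boot all_order all_algebra.
From mathcomp Require Import reals.
Set Implicit Arguments. Unset Strict Implicit. Unset Printing Implicit Defensive.
Import Order.TTheory GRing.Theory Num.Theory.
Local Open Scope ring_scope.

(* Spins {0,1,star} are encoded as 'I_3 : 0 <-> 0, 1 <-> 1, 2 <-> star.
   The order 0 < 1 < star is the natural order on the values. *)
Definition sZero : 'I_3 := @Ordinal 3 0 isT.
Definition sOne  : 'I_3 := @Ordinal 3 1 isT.
Definition sStar : 'I_3 := @Ordinal 3 2 isT.

Section Defs.
Variables (R : realType) (V : finType).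

Definition bconf := {ffun V -> bool}.
Definition sconf := {ffun V -> 'I_3}.

Definition sle (X Y : sconf) : Prop := forall v, (nat_of_ord (X v) <= nat_of_ord (Y v))%N.

Definition is_distr (T : finType) (p : {ffun T -> R}) : Prop :=
  (forall x, 0 <= p x) /\ \sum_x p x = 1.

Definition contr (X : sconf) : bconf := [ffun v => X v != sZero].

(* probability that lift maps a bit b to the spin c *)
Definition lift_prob (theta : R) (b : bool) (c : 'I_3) : R :=
  if b then (if c == sOne then theta else if c == sStar then 1 - theta else 0)
  else (if c == sZero then 1 else 0).

(* pi = law of lift(X), X ~ mu *)
Definition piL (mu : {ffun bconf -> R}) (theta : R) (X : sconf) : R :=
  \sum_(s : bconf) mu s * \prod_(v : V) lift_prob theta (s v) (X v).

Definition ones (s : bconf) : nat := #|[set v | s v]|.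

Definition tilt (mu : {ffun bconf -> R}) (theta : R) (s : bconf) : R :=
  mu s * theta ^+ ones s / \sum_(t : bconf) mu t * theta ^+ ones t.

Definition updb (s : bconf) (i : V) (b : bool) : bconf :=
  [ffun v => if v == i then b else s v].
Definition upds (X : sconf) (i : V) (c : 'I_3) : sconf :=
  [ffun v => if v == i then c else X v].

Definition tilt_cond (mu : {ffun bconf -> R}) (theta : R) (i : V) (s : bconf)
  (b : bool) : R :=
  tilt mu theta (updb s i b) / \sum_(b' : bool) tilt mu theta (updb s i b').

Definition agree_off (i : V) (X Y : sconf) : bool :=
  [forall v, (v != i) ==> (Y v == X v)].

Definition P_piGD (mu : {ffun bconf -> R}) (theta : R) (i : V) (X Y : sconf) : R :=
  if agree_off i X Y
  then piL mu theta Y / \sum_(c : 'I_3) piL mu theta (upds X i c)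
  else 0.

Definition P_sGD (mu : {ffun bconf -> R}) (theta : R) (i : V) (X Y : sconf) : R :=
  if X i == sStar then (Y == X)%:R
  else if agree_off i X Y && (Y i != sStar)
       then tilt_cond mu theta i (contr X) (Y i != sZero)
       else 0.

Definition push (nu : {ffun sconf -> R}) (P : sconf -> sconf -> R) (Y : sconf) : R :=
  \sum_(X : sconf) nu X * P X Y.

Definition sd_le (nu nu' : sconf -> R) : Prop :=
  forall f : sconf -> R, (forall X, 0 <= f X) ->
    (forall X Y, sle X Y -> f X <= f Y) ->
    \sum_X nu X * f X <= \sum_X nu' X * f X.

End Defs.

(* Both kernels only resample the spin at i, so they act separately on each fibre
   {X with the spin at i replaced by c : c in {0, 1, star}}; on such a fibre pi is
   proportional to the weights p_c = pi(X^c).  From 0 or 1, s-GD draws c in {0, 1}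
   with probability p_c / (p_0 + p_1) (the tilted conditional law of mu is exactly
   this), and it leaves star fixed; pi-GD draws c in {0, 1, star} with probability
   p_c / (p_0 + p_1 + p_2).  With a_c = nu(X^c) and f_c = f(X^c), the gap between
   the two expectations of f on the fibre is
     (f_star (p_0 + p_1) - p_0 f_0 - p_1 f_1) (a_star (p_0 + p_1) - (a_0 + a_1) p_star),
   divided by a positive number: the first factor is nonnegative because star is the
   top spin and f is increasing, the second because nu/pi is increasing. *)
From HB Require Import structures.
From mathcomp Require Import all_boot all_order all_algebra.
From mathcomp Require Import reals.
From mathcomp Require Import ring lra.
Set Implicit Arguments. Unset Strict Implicit. Unset Printing Implicit Defensive.
Import Order.TTheory GRing.Theory Num.Theory.
Local Open Scope ring_scope.

Lemma ler_cross_of_ratio (R : realFieldType) (a b p q : R) :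
  0 <= p -> 0 <= q -> (p = 0 -> a = 0) -> (q = 0 -> b = 0) ->
  (0 < p -> 0 < q -> a / p <= b / q) -> a * q <= b * p.
Proof.
move=> p_ge0 q_ge0 a_supp b_supp ratio_le.
have [p0|p_neq0] := eqVneq p 0; first by rewrite (a_supp p0) p0 mul0r mulr0.
have [q0|q_neq0] := eqVneq q 0; first by rewrite (b_supp q0) q0 mul0r mulr0.
have p_gt0 : 0 < p by rewrite lt_def p_neq0.
have q_gt0 : 0 < q by rewrite lt_def q_neq0.
by move: (ratio_le p_gt0 q_gt0); rewrite ler_pdivlMr // mulrAC ler_pdivrMr.
Qed.

Lemma resample_top_mean_le (R : realFieldType) (a0 a1 a2 p0 p1 p2 f0 f1 f2 : R) :
  0 <= a0 -> 0 <= a1 -> 0 <= p0 -> 0 <= p1 -> 0 <= p2 -> (p2 = 0 -> a2 = 0) ->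
  a0 * p2 <= a2 * p0 -> a1 * p2 <= a2 * p1 -> f0 <= f2 -> f1 <= f2 ->
  (a0 + a1 + a2) * ((p0 * f0 + p1 * f1 + p2 * f2) / (p0 + p1 + p2))
  <= (a0 + a1) * ((p0 * f0 + p1 * f1) / (p0 + p1)) + a2 * f2.
Proof.
move=> a0_ge0 a1_ge0 p0_ge0 p1_ge0 p2_ge0 a2_supp cross0 cross1 f0_le f1_le.
have [p2_0|p2_neq0] := eqVneq p2 0.
  by rewrite (a2_supp p2_0) p2_0 !mul0r !addr0.
have p2_gt0 : 0 < p2 by rewrite lt_def p2_neq0.
have [S0|S_neq0] := eqVneq (p0 + p1) 0.
  have [p0_0 p1_0] : p0 = 0 /\ p1 = 0 by split; lra.
  rewrite p0_0 p1_0 !mulr0 in cross0 cross1 *.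
  have [-> ->] : a0 = 0 /\ a1 = 0 by split; nra.
  by rewrite !(mul0r, add0r) [p2 * _]mulrC mulfK.
have S_gt0 : 0 < p0 + p1 by rewrite lt_def S_neq0 addr_ge0.
have P_gt0 : 0 < p0 + p1 + p2 by rewrite addr_gt0.
rewrite -subr_ge0.
have -> : (a0 + a1) * ((p0 * f0 + p1 * f1) / (p0 + p1)) + a2 * f2
    - (a0 + a1 + a2) * ((p0 * f0 + p1 * f1 + p2 * f2) / (p0 + p1 + p2))
  = (f2 * (p0 + p1) - (p0 * f0 + p1 * f1)) * (a2 * (p0 + p1) - (a0 + a1) * p2)
    / ((p0 + p1) * (p0 + p1 + p2)).
  by field; rewrite S_neq0 gt_eqF.
apply: divr_ge0; last by rewrite ltW // mulr_gt0.
by apply: mulr_ge0; nra.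
Qed.

Section Fibres.
Variables (R : pzSemiRingType) (V : finType) (i : V).
Implicit Types (X Y : sconf V).

Lemma sum_I3 (F : 'I_3 -> R) : \sum_c F c = F sZero + F sOne + F sStar.
Proof.
rewrite !big_ord_recr big_ord0 /= add0r.
by congr (_ + _ + _); congr F; apply: val_inj.
Qed.

Lemma spin_neq_star (c : 'I_3) : c != sStar -> c = sZero \/ c = sOne.
Proof. by case: c => [[|[|[|//]]] ?] // _; [left | right]; apply: val_inj. Qed.

Lemma upds_at X c : upds X i c i = c.
Proof. by rewrite ffunE eqxx. Qed.

Lemma upds_upds X c c' : upds (upds X i c) i c' = upds X i c'.
Proof. by apply/ffunP=> v; rewrite !ffunE; case: eqP. Qed.

Lemma sle_upds X (c c' : 'I_3) : (c <= c')%N -> sle (upds X i c) (upds X i c').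
Proof. by move=> le_cc' v; rewrite !ffunE; case: eqP. Qed.

Lemma agree_offE X Y : agree_off i X Y = (Y == upds X i (Y i)).
Proof.
apply/forallP/eqP => [agree | Y_eq v].
  apply/ffunP=> v; rewrite ffunE; case: eqP => [-> // | /eqP v_neq_i].
  exact/eqP/(implyP (agree v)).
by apply/implyP => v_neq_i; rewrite Y_eq ffunE (negbTE v_neq_i).
Qed.

Lemma agree_offC X Y : agree_off i X Y = agree_off i Y X.
Proof.
by apply/forallP/forallP => agree v; apply/implyP => v_neq_i;
  rewrite eq_sym (implyP (agree v) v_neq_i).
Qed.

Lemma sum_agree_off X (G : sconf V -> R) :
  \sum_Y (if agree_off i X Y then G Y else 0) = \sum_c G (upds X i c).
Proof.
transitivity (\sum_Y \sum_c (if Y == upds X i c then G Y else 0)).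
  apply: eq_bigr => Y _; rewrite agree_offE (bigD1 (Y i)) //= big1 ?addr0 //.
  by move=> c c_neq; case: eqP => // Y_eq; rewrite Y_eq upds_at eqxx in c_neq.
rewrite exchange_big /=; apply: eq_bigr => c _.
by rewrite (bigD1 (upds X i c)) //= eqxx big1 ?addr0 // => Y /negbTE ->.
Qed.

Lemma sum_upds (H : sconf V -> R) :
  \sum_X \sum_c H (upds X i c) = (\sum_X H X) *+ 3.
Proof.
transitivity (\sum_X \sum_Y (if agree_off i X Y then H Y else 0)).
  by apply: eq_bigr => X _; rewrite sum_agree_off.
rewrite exchange_big -sumrMnl; apply: eq_bigr => Y _.
under eq_bigr do rewrite agree_offC.
by rewrite (sum_agree_off Y (fun=> H Y)) sumr_const card_ord.
Qed.

End Fibres.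

Section Lift.
Variables (R : realType) (V : finType) (mu : {ffun bconf V -> R}) (theta : R).
Hypotheses (mu_distr : is_distr mu) (theta_range : 0 < theta < 1).
Implicit Types (X Y : sconf V) (s : bconf V).

Definition lift_weight (c : 'I_3) : R := lift_prob theta (c != sZero) c.

Lemma lift_weight0 : lift_weight sZero = 1. Proof. by []. Qed.
Lemma lift_weight1 : lift_weight sOne = theta. Proof. by []. Qed.

Lemma lift_weight_gt0 c : 0 < lift_weight c.
Proof.
case/andP: theta_range => theta_gt0 theta_lt1.
by case: c => [[|[|[|//]]] ?]; rewrite /lift_weight /lift_prob //= subr_gt0.
Qed.

Lemma lift_prob_eq0 b c : b != (c != sZero) -> lift_prob theta b c = 0.
Proof. by case: b; case: c => [[|[|[|//]]] ?]. Qed.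

Lemma piL_contr X : piL mu theta X = mu (contr X) * \prod_v lift_weight (X v).
Proof.
rewrite /piL (bigD1 (contr X)) //= [rest in _ + rest]big1 ?addr0 => [|s s_neq].
  by congr (_ * _); apply: eq_bigr => v _; rewrite ffunE.
have [v s_v_neq] : exists v, s v != contr X v.
  apply/existsP; apply: contraR s_neq => /existsPn s_eq.
  by apply/eqP/ffunP => v; apply/eqP; rewrite -[_ == _]negbK s_eq.
rewrite (bigD1 v) //= lift_prob_eq0 ?mul0r ?mulr0 //.
by rewrite -(ffunE (fun v => X v != sZero)).
Qed.

Lemma piL_ge0 X : 0 <= piL mu theta X.
Proof.
rewrite piL_contr mulr_ge0 //; first by case: mu_distr.
by apply: prodr_ge0 => v _; apply/ltW/lift_weight_gt0.
Qed.

Lemma contr_upds X i c : contr (upds X i c) = updb (contr X) i (c != sZero).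
Proof. by apply/ffunP => v; rewrite !ffunE; case: (v == i). Qed.

Lemma piL_upds X i c : piL mu theta (upds X i c) =
  mu (updb (contr X) i (c != sZero)) *
  (lift_weight c * \prod_(v | v != i) lift_weight (X v)).
Proof.
rewrite piL_contr contr_upds (bigD1 i) //= upds_at; congr (_ * (_ * _)).
by apply: eq_bigr => v v_neq_i; rewrite ffunE (negbTE v_neq_i).
Qed.

Lemma ones_updbT s i : ones (updb s i true) = (ones (updb s i false)).+1.
Proof.
rewrite /ones; have -> : [set v | updb s i true v] = i |: [set v | updb s i false v].
  by apply/setP => v; rewrite !inE !ffunE; case: eqP.
by rewrite cardsU1 inE ffunE eqxx.
Qed.

Lemma tilt_normalizer_gt0 : 0 < \sum_t mu t * theta ^+ ones t.
Proof.
case: mu_distr => mu_ge0 mu_sum1; case/andP: theta_range => theta_gt0 _.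
have term_ge0 t : 0 <= mu t * theta ^+ ones t by rewrite mulr_ge0 // exprn_ge0 // ltW.
rewrite lt_def sumr_ge0 // andbT psumr_neq0 //.
have : \sum_t mu t != 0 by rewrite mu_sum1 oner_eq0.
rewrite psumr_neq0 // => /hasP [t _ /= mu_t_gt0].
by apply/hasP; exists t; rewrite ?mem_index_enum //= mulr_gt0 // exprn_gt0.
Qed.

Lemma tilt_condE i s b : tilt_cond mu theta i s b =
  (if b then theta * mu (updb s i true) else mu (updb s i false)) /
  (mu (updb s i false) + theta * mu (updb s i true)).
Proof.
set q := theta ^+ ones (updb s i false) / \sum_t mu t * theta ^+ ones t.
have q_neq0 : q != 0.
  case/andP: theta_range => theta_gt0 _.
  by rewrite mulf_neq0 ?invr_eq0 ?expf_neq0 // gt_eqF // tilt_normalizer_gt0.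
have tiltE b' : tilt mu theta (updb s i b') =
    (if b' then theta * mu (updb s i true) else mu (updb s i false)) * q.
  by case: b'; rewrite /tilt /q ?ones_updbT ?exprS; ring.
by rewrite /tilt_cond big_bool /= !tiltE -mulrDl addrC -mulf_div divff ?mulr1.
Qed.

Lemma tilt_cond_piL Y i c : c != sStar ->
  tilt_cond mu theta i (contr Y) (c != sZero) =
  piL mu theta (upds Y i c) /
  (piL mu theta (upds Y i sZero) + piL mu theta (upds Y i sOne)).
Proof.
rewrite tilt_condE !piL_upds.
set K := \prod_(v | v != i) _.
have cancelK x y : x / y = (x * K) / (y * K).
  rewrite -mulf_div divff ?mulr1 // gt_eqF // prodr_gt0 // => v _.
  exact: lift_weight_gt0.
clearbody K.
by case/spin_neq_star=> ->; rewrite lift_weight0 lift_weight1 /= cancelK;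
  congr (_ / _); ring.
Qed.

Definition kmean (P : sconf V -> sconf V -> R) (f : sconf V -> R) X : R :=
  \sum_Y P X Y * f Y.

Lemma push_kmean (nu : {ffun sconf V -> R}) P f :
  \sum_Y push nu P Y * f Y = \sum_X nu X * kmean P f X.
Proof.
rewrite /push; under eq_bigr do rewrite mulr_suml.
rewrite exchange_big; apply: eq_bigr => X _; rewrite mulr_sumr.
by apply: eq_bigr => Y _; rewrite mulrA.
Qed.

Lemma kmean_piGD i f Y : kmean (P_piGD mu theta i) f Y =
  (\sum_c piL mu theta (upds Y i c) * f (upds Y i c)) / \sum_c piL mu theta (upds Y i c).
Proof.
transitivity (\sum_Z (if agree_off i Y Z
  then piL mu theta Z * f Z / \sum_c piL mu theta (upds Y i c) else 0)).
  by apply: eq_bigr => Z _; rewrite /P_piGD; case: ifP; rewrite ?mul0r // mulrAC.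
by rewrite sum_agree_off mulr_suml.
Qed.

Lemma kmean_sGD_star i f Y : Y i = sStar -> kmean (P_sGD mu theta i) f Y = f Y.
Proof.
move=> Y_i; rewrite /kmean /P_sGD Y_i eqxx (bigD1 Y) //= eqxx mul1r.
by rewrite big1 ?addr0 // => Z /negbTE ->; rewrite mul0r.
Qed.

Lemma kmean_sGD i f Y : Y i != sStar -> kmean (P_sGD mu theta i) f Y =
  (piL mu theta (upds Y i sZero) * f (upds Y i sZero) +
   piL mu theta (upds Y i sOne) * f (upds Y i sOne)) /
  (piL mu theta (upds Y i sZero) + piL mu theta (upds Y i sOne)).
Proof.
move=> Y_i.
transitivity (\sum_Z (if agree_off i Y Z then
    (if Z i != sStar then tilt_cond mu theta i (contr Y) (Z i != sZero) else 0) * f Z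
  else 0)).
  by apply: eq_bigr => Z _; rewrite /P_sGD (negbTE Y_i); case: agree_off; rewrite ?mul0r.
rewrite sum_agree_off sum_I3 !upds_at -[sZero != sStar]/true -[sStar != sStar]/false.
rewrite (@tilt_cond_piL Y i sZero); last by [].
rewrite (@tilt_cond_piL Y i sOne); last by [].
by rewrite mul0r addr0 mulrDl; congr (_ + _); apply: mulrAC.
Qed.

Lemma fibre_kmean_le (nu : {ffun sconf V -> R}) (f : sconf V -> R) i X :
  (forall Y, 0 <= nu Y) -> (forall Y, piL mu theta Y = 0 -> nu Y = 0) ->
  (forall Y Z, 0 < piL mu theta Y -> 0 < piL mu theta Z -> sle Y Z ->
     nu Y / piL mu theta Y <= nu Z / piL mu theta Z) ->
  (forall Y Z, sle Y Z -> f Y <= f Z) ->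
  \sum_c nu (upds X i c) * kmean (P_piGD mu theta i) f (upds X i c)
  <= \sum_c nu (upds X i c) * kmean (P_sGD mu theta i) f (upds X i c).
Proof.
move=> nu_ge0 nu_supp nu_mono f_mono.
have cross (c : 'I_3) : (c <= sStar)%N ->
    nu (upds X i c) * piL mu theta (upds X i sStar)
    <= nu (upds X i sStar) * piL mu theta (upds X i c).
  move=> c_le; apply: ler_cross_of_ratio; rewrite ?piL_ge0 //; try exact: nu_supp.
  by move=> pc_gt0 pstar_gt0; apply: nu_mono => //; apply: sle_upds.
rewrite !sum_I3 !kmean_piGD !sum_I3 !upds_upds.
rewrite (@kmean_sGD_star i f (upds X i sStar)) ?upds_at //.
rewrite (@kmean_sGD i f (upds X i sZero)) ?upds_at //.
rewrite (@kmean_sGD i f (upds X i sOne)) ?upds_at //.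
rewrite !upds_upds -!mulrDl.
apply: resample_top_mean_le; rewrite ?piL_ge0 ?cross //; try exact: nu_supp.
all: by apply: f_mono; apply: sle_upds.
Qed.

End Lift.

Theorem lemma7p1 (R : realType) (V : finType)
  (mu : {ffun bconf V -> R}) (theta : R) :
  is_distr mu -> 0 < theta < 1 ->
  forall (i : V) (nu : {ffun sconf V -> R}),
    is_distr nu ->
    (forall X, piL mu theta X = 0 -> nu X = 0) ->
    (forall X Y, 0 < piL mu theta X -> 0 < piL mu theta Y -> sle X Y ->
       nu X / piL mu theta X <= nu Y / piL mu theta Y) ->
    sd_le (push nu (P_piGD mu theta i)) (push nu (P_sGD mu theta i)).
Proof.
move=> mu_distr theta_range i nu [nu_ge0 _] nu_supp nu_mono f _ f_mono.
rewrite !push_kmean -(ler_pMn2r (isT : (0 < 3)%N)) -!(sum_upds i).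
by apply: ler_sum => X _; apply: fibre_kmean_le.
Qed.
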